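(* Let $P \subseteq \mathbb{R}^{n}$ be a half-integral polytope of dimension $d$, and suppose that there is an integer $s$ such that every vertex of $P$ has exactly $n-s$ coordinates equal to $1/2$. Then there is a shadow pivot rule such that, for every linear objective $\mathbf{c}$ and every starting vertex, the total number of non-degenerate steps taken by the Simplex method with this rule to solve $\max\{\mathbf{c}^{\intercal}\mathbf{x} : \mathbf{x}\in P\}$ is at most $2s$.
   Context: A half-integral polytope is a polytope all of whose vertices lie in $\{0,\tfrac12,1\}^{n}$. For linear objectives $\mathbf{c},\mathbf{d}$, let $F_0$ be the $\mathbf{d}$-minimal face of $P$; a $\mathbf{c}$-coherent $\mathbf{d}$-monotone path is a sequence of vertices $\mathbf{x}^0,\mathbf{x}^1,\dots,\mathbf{x}^m$ where $\mathbf{x}^0$ is a $\mathbf{c}$-maximum of $F_0$, $\mathbf{x}^m$ is a $\mathbf{c}$-maximum of the $\mathbf{d}$-maximal face, and $\mathbf{x}^{i+1}$ maximizes $\frac{\mathbf{c}^{\intercal}(\mathbf{u}-\mathbf{x}^i)}{\mathbf{d}^{\intercal}(\mathbf{u}-\mathbf{x}^i)}$ over all neighbors $\mathbf{u}$ of $\mathbf{x}^i$ (in the graph of $P$) with $\mathbf{d}^{\intercal}\mathbf{u}>\mathbf{d}^{\intercal}\mathbf{x}^i$. A shadow pivot rule for the Simplex method chooses, from the initial vertex $\mathbf{x}^0$ and the objective $\mathbf{c}$, an auxiliary vector $\mathbf{d}$ such that $\mathbf{x}^0$ is the $\mathbf{c}$-maximum of the $\mathbf{d}$-minimal face of $P$,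 and then pivots so that its non-degenerate steps (pivots that move along an edge of $P$ rather than staying at the same vertex) trace exactly the $\mathbf{c}$-coherent $\mathbf{d}$-monotone path. *)

From HB Require Import structures.
From mathcomp Require Import all_boot all_order all_algebra.
Set Implicit Arguments. Unset Strict Implicit. Unset Printing Implicit Defensive.
Import Order.TTheory GRing.Theory Num.Theory.
Local Open Scope ring_scope.

Section Polytopes.
Variables (R : realFieldType) (n : nat).
Notation vec := 'rV[R]_n.

Definition dot (c x : vec) : R := \sum_(i < n) c 0 i * x 0 i.

(* the polytope P = conv V, for a finite list of points V *)
Definition in_hull (V : seq vec) (x : vec) : Prop :=
  exists w : 'I_(size V) -> R,
    [/\ forall i, 0 <= w i, \sum_i w i = 1 & x = \sum_i w i *: V`_i].

Definition is_vertex (V : seq vec) (x : vec) : Prop :=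
  in_hull V x /\
  exists a : vec, forall y, in_hull V y -> y <> x -> dot a y < dot a x.

Definition in_segment (u v z : vec) : Prop :=
  exists t : R, [/\ 0 <= t, t <= 1 & z = (1 - t) *: u + t *: v].

Definition adjacent (V : seq vec) (u v : vec) : Prop :=
  [/\ is_vertex V u, is_vertex V v, u <> v &
   exists a : vec,
     dot a u = dot a v /\
     forall z, in_hull V z ->
       dot a z <= dot a u /\ (dot a z = dot a u -> in_segment u v z)].

Definition cmax_of_dmin_face (V : seq vec) (c d x : vec) : Prop :=
  [/\ is_vertex V x,
      forall y, in_hull V y -> dot d x <= dot d y &
      forall y, in_hull V y -> (forall z, in_hull V z -> dot d y <= dot d z) ->
        dot c y <= dot c x].

Definition cmax_of_dmax_face (V : seq vec) (c d x : vec) : Prop :=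
  [/\ is_vertex V x,
      forall y, in_hull V y -> dot d y <= dot d x &
      forall y, in_hull V y -> (forall z, in_hull V z -> dot d z <= dot d y) ->
        dot c y <= dot c x].

Definition coherent_step (V : seq vec) (c d x y : vec) : Prop :=
  [/\ adjacent V x y, dot d x < dot d y &
   forall u, adjacent V x u -> dot d x < dot d u ->
     dot c (u - x) / dot d (u - x) <= dot c (y - x) / dot d (y - x)].

Definition coherent_path (V : seq vec) (c d : vec) (p : seq vec) : Prop :=
  [/\ (0 < size p)%N,
      cmax_of_dmin_face V c d (head 0 p),
      cmax_of_dmax_face V c d (last 0 p) &
      forall i, (i.+1 < size p)%N -> coherent_step V c d (nth 0 p i) (nth 0 p i.+1)].

Definition half_integral (V : seq vec) : Prop :=
  forall x, is_vertex V x -> forall i, x 0 i \in [:: 0; 2^-1; 1].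

Definition num_halves (x : vec) : nat := #|[set i : 'I_n | x 0 i == 2^-1]|.

End Polytopes.

From HB Require Import structures.
From mathcomp Require Import all_boot all_order all_algebra.
From mathcomp Require Import lra zify.
Set Implicit Arguments. Unset Strict Implicit. Unset Printing Implicit Defensive.
Import Order.TTheory GRing.Theory Num.Theory.
Local Open Scope ring_scope.

(* Take for d the vector with d_i = 1 where x0_i = 0, d_i = -1 where x0_i = 1
   and d_i = 0 where x0_i = 1/2.  For every half-integral vertex y the number
   2 d^T (y - x0) is a natural number, at most 2 per integral coordinate of x0,
   hence at most 2s; since all vertices have the same number of halves, it
   vanishes only at y = x0, so x0 is the unique d-minimal vertex.  Each step of
   a d-monotone path raises this integer, so a path has at most 2s steps.
   As P is the hull of a list that may contain non-vertices, the c-maximum of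
   the d-minimal face is located through a vertex exposed by a lexicographic
   perturbation of (-d, c). *)

Section Dot.
Variables (R : realFieldType) (n : nat).
Implicit Types (a b x y : 'rV[R]_n) (k : R).

Lemma dotDl a b x : dot (a + b) x = dot a x + dot b x.
Proof. by rewrite /dot -big_split; apply: eq_bigr => i _; rewrite mxE mulrDl. Qed.

Lemma dotZl k a x : dot (k *: a) x = k * dot a x.
Proof. by rewrite /dot mulr_sumr; apply: eq_bigr => i _; rewrite mxE mulrA. Qed.

Lemma dotNl a x : dot (- a) x = - dot a x.
Proof. by rewrite /dot -sumrN; apply: eq_bigr => i _; rewrite mxE mulNr. Qed.

Lemma dotZr k a x : dot a (k *: x) = k * dot a x.
Proof. by rewrite /dot mulr_sumr; apply: eq_bigr => i _; rewrite mxE mulrCA. Qed.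

Lemma dotBr a x y : dot a (x - y) = dot a x - dot a y.
Proof. by rewrite /dot -sumrB; apply: eq_bigr => i _; rewrite !mxE mulrBr. Qed.

Lemma dotC a x : dot a x = dot x a.
Proof. by apply: eq_bigr => i _; rewrite mulrC. Qed.

Lemma dot_sumr m a (F : 'I_m -> 'rV[R]_n) :
  dot a (\sum_i F i) = \sum_i dot a (F i).
Proof.
by rewrite /dot exchange_big; apply: eq_bigr => i _; rewrite summxE mulr_sumr.
Qed.

Lemma dot_self_gt0 x : x != 0 -> 0 < dot x x.
Proof.
move=> x_neq0; have [i xi_neq0|x_eq0] := pickP (fun i => x 0 i != 0); last first.
  by case/eqP: x_neq0; apply/rowP => i; rewrite mxE; apply/eqP/negbFE/x_eq0.
rewrite /dot (bigD1 i) //= ltr_pwDl ?sumr_ge0 // => [|j _]; rewrite -expr2.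
  by rewrite lt_def sqrf_eq0 xi_neq0 sqr_ge0.
exact: sqr_ge0.
Qed.

End Dot.

Lemma exists_argmax (R : realFieldType) (T : eqType) (L : seq T) (F : T -> R) :
  L != [::] -> exists2 m, m \in L & forall v, v \in L -> F v <= F m.
Proof.
elim: L => // y L IH _; have [->|/IH [m mL m_max]] := eqVneq L [::].
  by exists y => [|v]; rewrite mem_seq1 // => /eqP->.
have [y_le|m_lt] := lerP (F y) (F m).
  by exists m => [|v]; rewrite inE ?mL ?orbT // => /predU1P [->|/m_max].
exists y => [|v]; rewrite inE ?eqxx // => /predU1P [->//|/m_max vm].
exact: le_trans vm (ltW m_lt).
Qed.

Section Hull.
Variables (R : realFieldType) (n : nat).
Implicit Types (V L : seq 'rV[R]_n) (a b m v x y : 'rV[R]_n).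

Lemma mem_in_hull V v : v \in V -> in_hull V v.
Proof.
move=> vV; pose i0 : 'I_(size V) := Ordinal (etrans (index_mem v V) vV).
exists (fun i => (i == i0)%:R); split=> [i||]; first exact: ler0n.
  by rewrite (bigD1 i0) //= eqxx big1 ?addr0 // => i /negbTE ->.
rewrite (bigD1 i0) //= eqxx scale1r nth_index // big1 ?addr0 // => i /negbTE ->.
exact: scale0r.
Qed.

Lemma in_hull_neq_nil V x : in_hull V x -> V != [::].
Proof.
by case: V => // -[w [_ + _]]; rewrite big_ord0 => /eqP; rewrite eq_sym oner_eq0.
Qed.

(* [y] is a convex combination of points of [V] on the face [a = r]. *)
Lemma hull_face_le V y a r b t :
  in_hull V y -> (forall v, v \in V -> dot a v <= r) -> r <= dot a y ->
  (forall v, v \in V -> dot a v = r -> dot b v <= t) -> dot b y <= t.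
Proof.
case=> w [w_ge0 w_sum1 ->] a_le r_le b_le.
have dotw e : dot e (\sum_i w i *: V`_i) = \sum_i w i * dot e V`_i.
  by rewrite dot_sumr; apply: eq_bigr => i _; rewrite dotZr.
have slack_ge0 i : 0 <= w i * (r - dot a V`_i).
  by rewrite mulr_ge0 ?subr_ge0 ?a_le ?mem_nth.
have slack_sum : \sum_i w i * (r - dot a V`_i) = 0.
  apply/eqP; rewrite eq_le sumr_ge0 // andbT.
  under eq_bigr do rewrite mulrBr.
  by rewrite sumrB -mulr_suml w_sum1 mul1r -dotw subr_le0.
rewrite dotw -[t]mul1r -w_sum1 mulr_suml; apply: ler_sum => i _.
have [->|wi_neq0] := eqVneq (w i) 0; first by rewrite !mul0r.
rewrite ler_wpM2l // b_le ?mem_nth //.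
have /eqP := psumr_eq0P (fun j _ => slack_ge0 j) slack_sum (i := i) isT.
by rewrite mulf_eq0 (negPf wi_neq0) subr_eq0 => /eqP.
Qed.

Lemma hull_le V y b t :
  in_hull V y -> (forall v, v \in V -> dot b v <= t) -> dot b y <= t.
Proof.
move=> Vy b_le; have [t_le|/ltW//] := lerP t (dot b y).
exact: hull_face_le Vy b_le t_le (fun v vV _ => b_le v vV).
Qed.

Definition exposes L b m := forall v, v \in L -> v != m -> dot b v < dot b m.

(* Tested against [y - m], the face argument gives [|y - m|^2 <= 0]. *)
Lemma exposed_vertex V b m : m \in V -> exposes V b m -> is_vertex V m.
Proof.
move=> mV b_exp; split; first exact: mem_in_hull.
exists b => y Vy y_neq_m; rewrite ltNge; apply/negP => bm_le.
have : dot (y - m) y <= dot (y - m) m.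
  apply: hull_face_le Vy _ bm_le _ => v vV.
    by have [->|/(b_exp v vV)/ltW] := eqVneq v m.
  by move=> bv_eq; have [->//|/(b_exp v vV)] := eqVneq v m; rewrite bv_eq ltxx.
have ym_neq0 : y - m != 0 by rewrite subr_eq0; exact/eqP.
by rewrite -subr_le0 -dotBr leNgt dot_self_gt0.
Qed.

Lemma exposes_max_norm L : L != [::] -> exists2 m, m \in L & exposes L (2 *: m) m.
Proof.
move=> /(exists_argmax (fun v => dot v v)) [m mL m_max]; exists m => // v vL v_neq_m.
have := dot_self_gt0 (_ : m - v != 0); rewrite subr_eq0 eq_sym => /(_ v_neq_m).
have := m_max v vL; rewrite !dotBr !dotDl !dotNl !dotZl (dotC v m); lra.
Qed.

(* Off the [f]-ties, a large enough multiple of [f] dominates [b]. *)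
Lemma exposes_perturb L f b m :
  (forall v, v \in L -> dot f v <= dot f m) ->
  exposes [seq v <- L | dot f v == dot f m] b m ->
  exists K, exposes L (K *: f + b) m.
Proof.
move=> f_le b_exp.
pose F v := if dot f v < dot f m then `|dot b v - dot b m| / (dot f m - dot f v) else 0.
have F_ge0 v : 0 <= F v.
  by rewrite /F; case: ifP => // f_lt; rewrite divr_ge0 // subr_ge0 ltW.
exists (1 + \sum_(v <- L) F v) => v vL v_neq_m; rewrite !dotDl !dotZl.
have := f_le v vL; rewrite le_eqVlt => /predU1P [f_eq|f_lt].
  by rewrite f_eq ltrD2l b_exp // mem_filter f_eq eqxx.
have gap_gt0 : 0 < dot f m - dot f v by rewrite subr_gt0.
have Fv_le : F v <= \sum_(v <- L) F v.
  by rewrite (big_rem v) //= lerDl sumr_ge0.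
have Fv_gap : F v * (dot f m - dot f v) = `|dot b v - dot b m|.
  by rewrite /F f_lt divfK ?gt_eqF.
have := ler_norm (dot b v - dot b m); have := ler_wpM2r (ltW gap_gt0) Fv_le.
rewrite Fv_gap; nra.
Qed.

Lemma exists_vertex_lexmax V f g : V != [::] ->
  exists m, [/\ is_vertex V m, forall v, v \in V -> dot f v <= dot f m &
    forall v, v \in V -> dot f v = dot f m -> dot g v <= dot g m].
Proof.
move=> /(exists_argmax (dot f)) [m1 m1V m1_max].
pose L1 := [seq v <- V | dot f v == dot f m1].
have m1L1 : m1 \in L1 by rewrite mem_filter eqxx.
have /(exists_argmax (dot g)) [m2 m2L1 m2_max] : L1 != [::].
  by apply: contraTneq m1L1 => ->.
pose L2 := [seq v <- L1 | dot g v == dot g m2].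
have m2L2 : m2 \in L2 by rewrite mem_filter eqxx.
have /exposes_max_norm [m mL2 m_exp] : L2 != [::].
  by apply: contraTneq m2L2 => ->.
move: mL2; rewrite !mem_filter => /and3P [/eqP gm /eqP fm mV].
have [K1 K1_exp] : exists K, exposes L1 (K *: g + 2 *: m) m.
  by apply: exposes_perturb; rewrite gm.
have [K2 K2_exp] : exists K, exposes V (K *: f + (K1 *: g + 2 *: m)) m.
  by apply: exposes_perturb; rewrite fm.
exists m; split=> [|v vV|v vV fv]; first exact: exposed_vertex K2_exp.
  by rewrite fm m1_max.
by rewrite gm m2_max // mem_filter fv fm eqxx.
Qed.

End Hull.

Section ShadowPath.
Variables (R : realFieldType) (n : nat).
Implicit Types (V p : seq 'rV[R]_n) (c d x y z : 'rV[R]_n).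

Lemma unique_dmin_vertex_cmax V c d x0 : is_vertex V x0 ->
  (forall y, is_vertex V y -> dot d y <= dot d x0 -> y = x0) ->
  cmax_of_dmin_face V c d x0.
Proof.
move=> x0V x0_uniq.
have [m [mV m_dmin m_cmax]] := exists_vertex_lexmax (- d) c (in_hull_neq_nil x0V.1).
have dm_le : dot (- d) x0 <= dot (- d) m := hull_le x0V.1 m_dmin.
have -> : x0 = m by apply/esym/x0_uniq => //; rewrite -lerN2 -!dotNl.
split=> // [y Vy|y Vy y_dmin]; first by rewrite -lerN2 -!dotNl (hull_le Vy m_dmin).
apply: hull_face_le Vy m_dmin _ m_cmax.
by rewrite !dotNl lerN2; apply: y_dmin; case: mV.
Qed.

Lemma coherent_path_vertex V c d p i :
  coherent_path V c d p -> (i < size p)%N -> is_vertex V (nth 0 p i).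
Proof.
case=> _ [headV _ _] _ step; case: i => [_|i ip]; first by rewrite nth0.
by have [[]] := step i ip.
Qed.

Lemma coherent_path_size V c d p (phi : 'rV[R]_n -> nat) k :
  coherent_path V c d p ->
  (forall y z, is_vertex V y -> is_vertex V z -> dot d y < dot d z -> (phi y < phi z)%N) ->
  (forall y, is_vertex V y -> (phi y <= k)%N) ->
  ((size p).-1 <= k)%N.
Proof.
move=> Pp phi_mono phi_le; have [size_gt0 _ _ step] := Pp.
have vertex_at := coherent_path_vertex Pp.
have phi_ge i : (i < size p)%N -> (i <= phi (nth 0%R p i))%N.
  elim: i => [//|i IH ip]; have [_ d_lt _] := step i ip.
  exact: leq_ltn_trans (IH (ltnW ip))
    (phi_mono _ _ (vertex_at _ (ltnW ip)) (vertex_at _ ip) d_lt).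
have last_lt : ((size p).-1 < size p)%N by rewrite prednK.
exact: leq_trans (phi_ge _ last_lt) (phi_le _ (vertex_at _ last_lt)).
Qed.

End ShadowPath.

Section HalfIntegral.
Variable R : realFieldType.
Implicit Types a b : R.

Definition away_coef a : R := if a == 0 then 1 else if a == 1 then -1 else 0.

Definition coord_gap a b : nat :=
  if a == 2^-1 then 0 else if b == a then 0 else if b == 2^-1 then 1 else 2.

Lemma coord_gapE a b : a \in [:: 0; 2^-1; 1] -> b \in [:: 0; 2^-1; 1] ->
  (coord_gap a b)%:R = 2 * (away_coef a * (b - a)).
Proof.
rewrite !inE => /or3P [] /eqP-> /or3P [] /eqP->; rewrite /coord_gap /away_coef;
  do ![case: eqP => //=]; lra.
Qed.

Lemma coord_gap_le a b : (coord_gap a b <= if a != 2^-1 then 2 else 0)%N.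
Proof. by rewrite /coord_gap; do ![case: ifP]. Qed.

Lemma coord_gap_eq0 a b : coord_gap a b = 0%N -> a = 2^-1 \/ b = a.
Proof. by rewrite /coord_gap; do ![case: eqP => //; auto]. Qed.

End HalfIntegral.

Section Gap.
Variables (R : realFieldType) (n : nat).
Implicit Types x y : 'rV[R]_n.

Definition away_dir x : 'rV[R]_n := \row_i away_coef (x 0 i).

Definition gap x y : nat := \sum_i coord_gap (x 0%R i) (y 0%R i).

Lemma gapE x y :
  (forall i, x 0 i \in [:: 0; 2^-1; 1]) -> (forall i, y 0 i \in [:: 0; 2^-1; 1]) ->
  (gap x y)%:R = 2 * (dot (away_dir x) y - dot (away_dir x) x).
Proof.
move=> x_half y_half; rewrite natr_sum /dot -sumrB mulr_sumr.
by apply: eq_bigr => i _; rewrite mxE coord_gapE // mulrBr.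
Qed.

Lemma gap_le x y : (gap x y <= 2 * (n - num_halves x))%N.
Proof.
have card_halves : (num_halves x + #|[set i | x 0%R i != 2^-1]| = n)%N.
  have := cardsC [set i | x 0%R i == 2^-1]; rewrite card_ord; apply: etrans.
  by congr (_ + _)%N; apply: eq_card => i; rewrite !inE.
apply: (@leq_trans (\sum_i (if x 0%R i != 2^-1 then 2 else 0))%N).
  by apply: leq_sum => i _; apply: coord_gap_le.
by rewrite -big_mkcond sum_nat_cond_const; lia.
Qed.

Lemma gap_eq0 x y : num_halves y = num_halves x -> gap x y = 0%N -> y = x.
Proof.
move=> same_halves /eqP; rewrite sum_nat_eq0 => /forallP gap0.
have coord i : x 0 i = 2^-1 \/ y 0 i = x 0 i by apply/coord_gap_eq0/eqP/gap0.
have sub : [set i | y 0 i == 2^-1] \subset [set i | x 0 i == 2^-1].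
  apply/subsetP => i; rewrite !inE => /eqP yi.
  by case: (coord i) => [->|<-]; rewrite ?yi.
have /eqP same_set : [set i | y 0 i == 2^-1] == [set i | x 0 i == 2^-1].
  by rewrite eqEcard sub /=; move: same_halves; rewrite /num_halves => ->.
apply/rowP => j; case: (coord j) => [xj|//].
have : j \in [set i | x 0 i == 2^-1] by rewrite inE xj.
by rewrite -same_set inE xj => /eqP.
Qed.

End Gap.

Theorem mainTheorem2 (R : realFieldType) (n : nat) (V : seq 'rV[R]_n) (s : nat) :
  half_integral V ->
  (forall x, is_vertex V x -> (num_halves x + s)%N = n) ->
  exists D : 'rV[R]_n -> 'rV[R]_n -> 'rV[R]_n,
    forall (c x0 : 'rV[R]_n), is_vertex V x0 ->
      cmax_of_dmin_face V c (D x0 c) x0 /\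
      forall p : seq 'rV[R]_n,
        coherent_path V c (D x0 c) p -> head 0 p = x0 ->
        ((size p).-1 <= 2 * s)%N.
Proof.
move=> half_V halves_V; exists (fun x0 _ => away_dir x0) => c x0 x0V.
have gapE_V y : is_vertex V y ->
    (gap x0 y)%:R = 2 * (dot (away_dir x0) y - dot (away_dir x0) x0).
  by move=> yV; apply: gapE; apply: half_V.
split.
  apply: unique_dmin_vertex_cmax => // y yV d_le.
  apply: gap_eq0; first by have := halves_V _ x0V; have := halves_V _ yV; lia.
  apply/eqP; rewrite -(eqr_nat R) gapE_V //.
  by have := ler0n R (gap x0 y); rewrite gapE_V //; lra.
move=> p path_p _; apply: (coherent_path_size path_p (phi := gap x0)).
  by move=> y z yV zV d_lt; rewrite -(ltr_nat R) !gapE_V //; lra.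
by move=> y _; rewrite (leq_trans (gap_le _ _)) //; have := halves_V _ x0V; lia.
Qed.
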